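(* Let $h>0$ be fixed, let $d=2$, and let $\{z_j\}_{j\ge 1}\subset\mathbb{R}$ be an observed scalar time series. Assume there exist a matrix $B^*\in\mathbb{R}^{2\times 2}$ and a (hidden) scalar series $\{z_j^{*\dagger}\}_{j\ge1}\subset\mathbb{R}$ such that, writing $\boldsymbol x^{*\ddagger}_j=(z_j,z_j^{*\dagger})^{\top}$, the underlying true linear dynamics $\boldsymbol x^{*\ddagger}_{j+1}=B^*\boldsymbol x^{*\ddagger}_j$ hold for all $j=1,2,\ldots$. Given $n$ observations $z_1,\dots,z_n$, let $(\hat B,\{\hat z^{\dagger}_j\}_{j=1}^n)$ be any minimizer, over $B\in\mathbb{R}^{2\times2}$ and $\{z_j^{\dagger}\}_{j=1}^n\subset\mathbb{R}$, of the ARS loss $$\ell(B,\{z^{\dagger}_j\}_{j=1}^n)=\sum_{j=1}^{n-1}\big\|\boldsymbol x^{\ddagger}_{j+1}-B\boldsymbol x^{\ddagger}_j\big\|_2^2,\qquad \boldsymbol x^{\ddagger}_j=(z_j,z_j^{\dagger})^{\top},$$ and set $\hat{\boldsymbol x}^{\ddagger}_n=(z_n,\hat z^{\dagger}_n)^{\top}$. Then, for sufficiently large $n$, the ARS prediction $\hat z_{n+k}=(1,0)\hat B^k\hat{\boldsymbol x}^{\ddagger}_n$ coincides with the true value $z_{n+k}$ for every $k\in\mathbb{N}$.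
   Context: This is the autoregressive with slack time series (ARS) model in the case of a 2-dimensional state with one observed coordinate ($r=1$) and one missing coordinate ($s=1$): the missing coordinate is replaced by a slack time series $\{z_j^{\dagger}\}$ that is estimated jointly with the AR(1) transition matrix $B$ by minimizing the loss above. Here $z_j$ denotes the observation at time $jh$. *)

From HB Require Import structures.
From mathcomp Require Import all_boot all_order all_algebra.
From mathcomp Require Import reals.
Set Implicit Arguments. Unset Strict Implicit. Unset Printing Implicit Defensive.
Import Order.TTheory GRing.Theory Num.Theory.
Local Open Scope ring_scope.

(* Time index j >= 1 is represented by the natural number j; the value at
   index 0 is irrelevant (never used). *)

Definition xdd (R : realType) (z zd : nat -> R) (j : nat) : 'cV[R]_2 :=
  \col_(i < 2) (if (i == 0 :> nat) then z j else zd j).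

Definition sqnorm2 (R : realType) (v : 'cV[R]_2) : R :=
  \sum_(i < 2) (v i ord0) ^+ 2.

Definition ars_loss (R : realType) (n : nat) (z : nat -> R)
    (B : 'M[R]_2) (zd : nat -> R) : R :=
  \sum_(1 <= j < n) sqnorm2 (xdd z zd j.+1 - B *m xdd z zd j).

(* (Bhat, zdhat) minimizes the ARS loss over all B and all slack series
   (only the values zd_1..zd_n enter the loss). *)
Definition is_ars_minimizer (R : realType) (n : nat) (z : nat -> R)
    (Bhat : 'M[R]_2) (zdhat : nat -> R) : Prop :=
  forall (B : 'M[R]_2) (zd : nat -> R),
    ars_loss n z Bhat zdhat <= ars_loss n z B zd.

Definition e1row (R : realType) : 'rV[R]_2 :=
  \row_(i < 2) (if (i == 0 :> nat) then 1 else 0).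

Definition ars_pred (R : realType) (z : nat -> R) (Bhat : 'M[R]_2)
    (zdhat : nat -> R) (n k : nat) : R :=
  (e1row R *m (Bhat ^+ k) *m xdd z zdhat n) ord0 ord0.

From HB Require Import structures.
From mathcomp Require Import all_boot all_order all_algebra.
From mathcomp Require Import reals.
From mathcomp Require Import ring.

Set Implicit Arguments.
Unset Strict Implicit.
Unset Printing Implicit Defensive.
Import Order.TTheory GRing.Theory Num.Theory.
Local Open Scope ring_scope.

(* The true pair (B*, z*^dagger) has loss 0, so every minimizer has loss 0 and
   its slack states follow x_{j+1} = Bhat x_j exactly on the sample.  By
   Cayley-Hamilton, m |-> (1,0) A^m x satisfies the order-2 linear recurrence
   u_{m+2} = tr A u_{m+1} - det A u_m; this holds both for the true sequence
   z_{m+1} and for the prediction sequence of (Bhat, xhat_1).  Two order-2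
   recurrent sequences agreeing on four consecutive terms agree everywhere,
   so once n >= 4 the predictions are exact. *)

Definition linrec2 (R : pzRingType) (a b : R) (u : nat -> R) : Prop :=
  forall m, u m.+2 = a * u m.+1 + b * u m.

Section LinearRecurrence.

Variable R : comPzRingType.
Implicit Types (a b c d : R) (u v : nat -> R).

Lemma linrec2_eq0 a b u :
  linrec2 a b u -> u 0%N = 0 -> u 1%N = 0 -> u =1 fun=> 0.
Proof.
move=> rec u0 u1.
suff u_pair m : u m = 0 /\ u m.+1 = 0 by move=> m; case: (u_pair m).
elim: m => [|m [um um1]]; first by [].
by rewrite rec um um1 !mulr0 addr0.
Qed.

Lemma linrec2_eq a b u v : linrec2 a b u -> linrec2 a b v ->
  u 0%N = v 0%N -> u 1%N = v 1%N -> u =1 v.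
Proof.
move=> recu recv u0 u1 m; apply/eqP; rewrite -subr_eq0; apply/eqP.
apply: (linrec2_eq0 (a := a) (b := b) (u := fun m => u m - v m)).
- by move=> k; rewrite recu recv; ring.
- by rewrite u0 subrr.
- by rewrite u1 subrr.
Qed.

(* The residual v_{m+2} - a v_{m+1} - b v_m of v in u's recurrence is itself
   (c, d)-recurrent and vanishes at m = 0, 1; hence v is (a, b)-recurrent. *)
Lemma linrec2_eq4 a b c d u v : linrec2 a b u -> linrec2 c d v ->
  (forall m, (m < 4)%N -> u m = v m) -> u =1 v.
Proof.
move=> recu recv uv.
pose res m := v m.+2 - a * v m.+1 - b * v m.
have res_rec : linrec2 c d res by move=> m; rewrite /res !recv; ring.
have res0 : res 0%N = 0 by rewrite /res -!uv // recu; ring.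
have res1 : res 1%N = 0 by rewrite /res -!uv // recu; ring.
have recv' : linrec2 a b v.
  move=> m; apply/eqP; rewrite -subr_eq0 opprD addrA; apply/eqP.
  exact: (linrec2_eq0 res_rec res0 res1 m).
by apply: linrec2_eq recu recv' (uv 0%N isT) (uv 1%N isT).
Qed.

End LinearRecurrence.

Lemma char_poly2 (R : comNzRingType) (A : 'M[R]_2) :
  char_poly A = 'X^2 - (\tr A)%:P * 'X + (\det A)%:P.
Proof.
apply/polyP => i; rewrite coefD coefB coefXn coefCM coefX coefC.
case: i => [|[|[|i]]] /=.
- by rewrite char_poly_det expr2 mulrNN !mul1r mulr0 !subr0 add0r.
- by rewrite (char_poly_trace A) // mulr1 sub0r addr0.
- have := lead_coefE (char_poly A); rewrite size_char_poly => <-.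
  by rewrite (monicP (char_poly_monic A)) mulr0 !subr0 addr0.
- by rewrite nth_default ?size_char_poly // mulr0 subrr addr0.
Qed.

Lemma mx2_exprSS (R : comNzRingType) (A : 'M[R]_2) m :
  A ^+ m.+2 = \tr A *: A ^+ m.+1 - \det A *: A ^+ m.
Proof.
have CH := Cayley_Hamilton A.
rewrite char_poly2 !rmorphD rmorphN !rmorphM /= horner_mx_X !horner_mx_C in CH.
have sqrA : A * A = (\tr A)%:M * A - (\det A)%:M.
  by apply/eqP; rewrite -subr_eq0 opprB addrA addrAC CH.
rewrite 2!exprS mulrA sqrA mulrBl -mulrA -exprS.
by rewrite -!mul_scalar_mx.
Qed.

Lemma mx2_expr_entry_linrec2 (R : comNzRingType) p q (A : 'M[R]_2)
    (X : 'M_(p, 2)) (Y : 'M_(2, q)) i j :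
  linrec2 (\tr A) (- \det A) (fun m => (X *m A ^+ m *m Y) i j).
Proof.
move=> m; rewrite mx2_exprSS mulmxBr mulmxBl -!scalemxAr -!scalemxAl.
by rewrite !mxE mulNr.
Qed.

Lemma mulmx_orbit (R : pzRingType) p n (A : 'M[R]_p) (x : nat -> 'cV[R]_p) :
  (forall j, (1 <= j < n)%N -> x j.+1 = A *m x j) ->
  forall j, (j < n)%N -> x j.+1 = A ^+ j *m x 1%N.
Proof.
move=> step; elim=> [|j IHj] lt_jn; first by rewrite expr0 mul1mx.
by rewrite step ?lt_jn // IHj ?(ltnW lt_jn) // exprS mulmxA.
Qed.

Section ARS.

Variables (R : realType) (n : nat) (z : nat -> R).

Lemma e1row_xdd (zd : nat -> R) j : (e1row R *m xdd z zd j) ord0 ord0 = z j.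
Proof. by rewrite !mxE !big_ord_recl big_ord0 !mxE /= mul1r mul0r !addr0. Qed.

Lemma sqnorm2_ge0 (v : 'cV[R]_2) : 0 <= sqnorm2 v.
Proof. by apply: sumr_ge0 => i _; apply: sqr_ge0. Qed.

Lemma sqnorm2_eq0 (v : 'cV[R]_2) : sqnorm2 v = 0 -> v = 0.
Proof.
move=> /psumr_eq0P v0; apply/matrixP => i j; rewrite (ord1 j) mxE.
by apply/eqP; rewrite -sqrf_eq0; apply/eqP/v0 => // k _; apply: sqr_ge0.
Qed.

Lemma ars_loss_ge0 B zd : 0 <= ars_loss n z B zd.
Proof. by apply: sumr_ge0 => j _; apply: sqnorm2_ge0. Qed.

Lemma ars_loss_eq0 B zd :
  ars_loss n z B zd = 0 <->
  (forall j, (1 <= j < n)%N -> xdd z zd j.+1 = B *m xdd z zd j).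
Proof.
split=> [|fit].
  move/eqP; rewrite psumr_eq0 => [/allP loss0 j lt_j|j _]; last first.
    exact: sqnorm2_ge0.
  apply/eqP; rewrite -subr_eq0; apply/eqP/sqnorm2_eq0/eqP/loss0.
  by rewrite mem_index_iota.
rewrite /ars_loss big_nat_cond big1 // => j /andP[lt_j _].
by rewrite fit // subrr /sqnorm2 big1 // => i _; rewrite mxE expr0n.
Qed.

Lemma ars_minimizer_fit Bhat zdhat B zd :
  is_ars_minimizer n z Bhat zdhat ->
  (forall j, (1 <= j < n)%N -> xdd z zd j.+1 = B *m xdd z zd j) ->
  forall j, (1 <= j < n)%N -> xdd z zdhat j.+1 = Bhat *m xdd z zdhat j.
Proof.
move=> min /ars_loss_eq0 loss0; apply/ars_loss_eq0.
by apply/le_anti; rewrite ars_loss_ge0 -loss0 min.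
Qed.

Lemma e1row_orbit B zd :
  (forall j, (1 <= j < n)%N -> xdd z zd j.+1 = B *m xdd z zd j) ->
  forall m, (m < n)%N ->
    (e1row R *m B ^+ m *m xdd z zd 1%N) ord0 ord0 = z m.+1.
Proof.
by move=> fit m lt_mn; rewrite -mulmxA -(mulmx_orbit fit) // e1row_xdd.
Qed.

End ARS.

Theorem proposition1 (R : realType) (h : R) (hpos : 0 < h)
  (z : nat -> R) (Bstar : 'M[R]_2) (zdstar : nat -> R)
  (Htrue : forall j : nat, (1 <= j)%N ->
     xdd z zdstar j.+1 = Bstar *m xdd z zdstar j) :
  exists N : nat, forall n : nat, (N <= n)%N ->
    forall (Bhat : 'M[R]_2) (zdhat : nat -> R),
      is_ars_minimizer n z Bhat zdhat ->
      forall k : nat, ars_pred z Bhat zdhat n k = z (n + k)%N.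
Proof.
exists 4%N => -[//|n] le4n Bhat zdhat min k.
have true_fit N j : (1 <= j < N)%N ->
    xdd z zdstar j.+1 = Bstar *m xdd z zdstar j.
  by case/andP=> /Htrue.
have hat_fit := ars_minimizer_fit min (true_fit n.+1).
pose u m := (e1row R *m Bstar ^+ m *m xdd z zdstar 1%N) ord0 ord0.
pose v m := (e1row R *m Bhat ^+ m *m xdd z zdhat 1%N) ord0 ord0.
have uv : u =1 v.
  have urec : linrec2 (\tr Bstar) (- \det Bstar) u.
    exact: mx2_expr_entry_linrec2.
  have vrec : linrec2 (\tr Bhat) (- \det Bhat) v.
    exact: mx2_expr_entry_linrec2.
  apply: linrec2_eq4 urec vrec _ => m lt_m4.
  by rewrite /u /v (e1row_orbit (true_fit 4%N)) ?(e1row_orbit hat_fit)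
       ?(leq_trans lt_m4).
rewrite /ars_pred (mulmx_orbit hat_fit) //.
rewrite !mulmxA -(mulmxA _ (Bhat ^+ k)) -[_ *m Bhat ^+ n]exprD.
rewrite -/(v (k + n)%N) -uv.
by rewrite /u (e1row_orbit (true_fit (k + n).+1)) // addSn addnC.
Qed.
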